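(* Let $P$ be a polyhedron, $F$ a poset, and $f\colon P\to F$ a surjective open polyhedral map. Whenever $x<y$ in $F$, we have $f^{-1}[x]\subseteq\partial f^{-1}[y]$.
   Context: A polyhedron is a finite union of convex hulls of finite subsets of some $\mathbb R^d$. $\mathrm{Sub}_o P$ denotes the set of open subpolyhedra of $P$ (sets $P\setminus R$ with $R\subseteq P$ a polyhedron). A map $f\colon P\to F$ to a poset is polyhedral if $f^{-1}[U]\in\mathrm{Sub}_o P$ for every upset $U$ of $F$, and open if $f[W]$ is an upset of $F$ for every $W\in\mathrm{Sub}_o P$. We write $f^{-1}[x]$ for $f^{-1}[\{x\}]$. For a set $X\subseteq\mathbb R^d$, its boundary is $\partial X=\mathrm{Cl}\,X\setminus\mathrm{Int}^{\mathrm{Aff}}X$, where $\mathrm{Int}^{\mathrm{Aff}}$ is the interior taken inside the affine hull $\mathrm{Aff}\,X$ of $X$. *)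

From HB Require Import structures.
From mathcomp Require Import all_boot all_order all_algebra.
From mathcomp Require Import all_classical all_reals all_analysis.
Set Implicit Arguments. Unset Strict Implicit. Unset Printing Implicit Defensive.
Import Order.TTheory GRing.Theory Num.Theory.
Import numFieldNormedType.Exports.
Local Open Scope classical_set_scope.
Local Open Scope ring_scope.

Definition conv_hull (R : realType) (d : nat) (s : seq 'rV[R]_d) : set 'rV[R]_d :=
  [set x | exists l : 'I_(size s) -> R,
     (forall i, 0 <= l i) /\ \sum_i l i = 1 /\
     x = \sum_i l i *: s`_i].

Definition polyhedron (R : realType) (d : nat) (P : set 'rV[R]_d) : Prop :=
  exists ss : seq (seq 'rV[R]_d),
    P = [set x | exists2 s, s \in ss & conv_hull s x].

Definition open_subpolyhedron (R : realType) (d : nat) (P W : set 'rV[R]_d) : Prop :=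
  exists Q, polyhedron Q /\ Q `<=` P /\ W = P `\` Q.

Definition upset (disp : Order.disp_t) (F : porderType disp) (U : set F) : Prop :=
  forall x y : F, U x -> (x <= y)%O -> U y.

(* f : P -> F is represented by a total function whose values off P are irrelevant. *)
Definition polyhedral_map (R : realType) (d : nat) (disp : Order.disp_t)
    (F : porderType disp) (P : set 'rV[R]_d) (f : 'rV[R]_d -> F) : Prop :=
  forall U : set F, upset U -> open_subpolyhedron P (P `&` f @^-1` U).

Definition open_map_on (R : realType) (d : nat) (disp : Order.disp_t)
    (F : porderType disp) (P : set 'rV[R]_d) (f : 'rV[R]_d -> F) : Prop :=
  forall W, open_subpolyhedron P W -> upset (f @` W).

Definition fibre (R : realType) (d : nat) (disp : Order.disp_t)
    (F : porderType disp) (P : set 'rV[R]_d) (f : 'rV[R]_d -> F) (x : F) :=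
  P `&` f @^-1` [set x].

Definition aff_hull (R : realType) (d : nat) (X : set 'rV[R]_d) : set 'rV[R]_d :=
  [set x | exists (s : seq 'rV[R]_d) (l : 'I_(size s) -> R),
     (forall i, X s`_i) /\ \sum_i l i = 1 /\ x = \sum_i l i *: s`_i].

Definition aff_interior (R : realType) (d : nat) (X : set 'rV[R]_d) : set 'rV[R]_d :=
  [set x | X x /\ exists2 e : R, 0 < e & ball x e `&` aff_hull X `<=` X].

Definition aff_boundary (R : realType) (d : nat) (X : set 'rV[R]_d) : set 'rV[R]_d :=
  closure X `\` aff_interior X.

(* Let p lie in the fibre of x < y and let e > 0.  The points of P at sup-distance at
   least e from p form a polyhedron Q, since they are covered by the 2d closed
   half-spaces bounding the open cube of radius e around p, and intersecting a convex
   hull with a half-space yields again the convex hull of finitely many points.  Hence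
   P \ Q is an open subpolyhedron containing p; its image under the open map f is an
   upset containing x, hence y, so the fibre of y meets every cube around p.  As p is
   not itself in that fibre, it is not in its relative interior either. *)

From HB Require Import structures.
From mathcomp Require Import all_boot all_order all_algebra.
From mathcomp Require Import all_classical all_reals all_analysis.
From mathcomp Require Import ring lra.
Set Implicit Arguments. Unset Strict Implicit. Unset Printing Implicit Defensive.
Import Order.TTheory GRing.Theory Num.Theory.
Import numFieldNormedType.Exports.
Local Open Scope classical_set_scope.
Local Open Scope ring_scope.

Section Polyhedra.
Variables (R : realType) (d : nat).
Local Notation V := 'rV[R]_d.

Definition lin_form (c : 'cV[R]_d) (z : V) : R := (z *m c) 0 0.

Definition halfspace (c : 'cV[R]_d) (t : R) : set V := [set z | t <= lin_form c z].

Lemma lin_form_sum (I : finType) (w : I -> R) (v : I -> V) c :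
  lin_form c (\sum_i w i *: v i) = \sum_i w i * lin_form c (v i).
Proof.
rewrite /lin_form mulmx_suml summxE; apply: eq_bigr => i _.
by rewrite -scalemxAl mxE.
Qed.

Lemma lin_formD c a b (u v : V) :
  lin_form c (a *: u + b *: v) = a * lin_form c u + b * lin_form c v.
Proof. by rewrite /lin_form mulmxDl -!scalemxAl !mxE. Qed.

Lemma conv_hull_comb (s : seq V) (I : finType) (w : I -> R) (v : I -> V) :
  (forall i, 0 <= w i) -> \sum_i w i = 1 -> (forall i, 0 < w i -> v i \in s) ->
  conv_hull s (\sum_i w i *: v i).
Proof.
move=> w0 w1 wv.
have w_eq0 i : ~~ (0 < w i) -> w i = 0.
  by move=> wi; apply/eqP; rewrite eq_le w0 andbT leNgt.
pose m i (k : 'I_(size s)) := (0 < w i) && (k == index (v i) s :> nat).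
have regroup (U : lmodType R) (G : nat -> U) (H : I -> U) :
    (forall i, 0 < w i -> G (index (v i) s) = H i) ->
    \sum_(k < size s) \sum_i (if m i k then w i *: G k else 0) = \sum_i w i *: H i.
  move=> GH; rewrite exchange_big /=; apply: eq_bigr => i _; rewrite /m.
  have [wi|wi] := boolP (0 < w i).
    by rewrite /= -big_mkcond (big_ord1_eq _ (fun k => w i *: G k)) index_mem wv // GH.
  by rewrite w_eq0 // scale0r big1.
exists (fun k : 'I_(size s) => \sum_i (if m i k then w i else 0)); split.
  by move=> k; apply: sumr_ge0 => i _; case: ifP.
split.
  rewrite exchange_big /= -w1; apply: eq_bigr => i _; rewrite /m.
  have [wi|wi] := boolP (0 < w i).
    by rewrite /= -big_mkcond (big_ord1_eq _ (fun=> w i)) index_mem wv.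
  by rewrite w_eq0 // big1 // => k; case: ifP.
rewrite -(regroup _ (fun k => s`_k) v); last by move=> i /wv vs; rewrite nth_index.
apply: eq_bigr => k _; rewrite scaler_suml; apply: eq_bigr => i _.
by case: ifP => // _; rewrite scale0r.
Qed.

Lemma conv_hull_sub (s T : seq V) : (forall u, u \in T -> conv_hull s u) ->
  conv_hull T `<=` conv_hull s.
Proof.
move=> Ts z [l [l0 [l1 ->]]].
have /choice[m mP] : forall k : 'I_(size T), exists m : 'I_(size s) -> R,
    (forall j, 0 <= m j) /\ \sum_j m j = 1 /\ T`_k = \sum_j m j *: s`_j.
  by move=> k; apply: Ts; exact: mem_nth.
exists (fun j => \sum_k l k * m k j); split.
  by move=> j; apply: sumr_ge0 => k _; apply: mulr_ge0 => //; case: (mP k).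
split.
  rewrite exchange_big /= -l1; apply: eq_bigr => k _.
  by rewrite -mulr_sumr; case: (mP k) => _ [-> _]; rewrite mulr1.
apply/esym; under eq_bigr do rewrite scaler_suml.
rewrite exchange_big /=; apply: eq_bigr => k _.
case: (mP k) => _ [_ ->]; rewrite scaler_sumr; apply: eq_bigr => j _.
by rewrite scalerA.
Qed.

Lemma conv_hull_sub_halfspace (T : seq V) c t :
  (forall u, u \in T -> halfspace c t u) -> conv_hull T `<=` halfspace c t.
Proof.
move=> Tc z [l [l0 [l1 ->]]]; rewrite /halfspace /= lin_form_sum.
rewrite -[t]mul1r -l1 mulr_suml; apply: ler_sum => i _.
by apply: ler_wpM2l => //; apply: Tc; exact: mem_nth.
Qed.

(* The point of the segment [a, b] on the hyperplane [lin_form c = t]. *)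
Definition cut_point c t (a b : V) : V :=
  let r := lin_form c a - lin_form c b in
  ((lin_form c a - t) / r) *: b + ((t - lin_form c b) / r) *: a.

Definition cut_vertices (s : seq V) c t : seq V :=
  let above := [seq a <- s | t <= lin_form c a] in
  above ++ [seq cut_point c t a b | a <- above, b <- [seq b <- s | lin_form c b < t]].

Lemma cut_vertices_halfspace s c t u :
  u \in cut_vertices s c t -> halfspace c t u.
Proof.
rewrite mem_cat => /orP[|/allpairsP[[a b] /= [+ + ->]]].
  by rewrite mem_filter => /andP[].
rewrite !mem_filter => /andP[ta _] /andP[bt _].
have ab : lin_form c a - lin_form c b != 0 by rewrite subr_eq0 gt_eqF //; lra.
by rewrite /halfspace /cut_point /= lin_formD le_eqVlt; apply/orP; left; apply/eqP; field.
Qed.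

Lemma cut_vertices_conv_hull s c t u :
  u \in cut_vertices s c t -> conv_hull s u.
Proof.
rewrite mem_cat => /orP[|/allpairsP[[a b] /= [+ + ->]]].
  rewrite mem_filter => /andP[_ us].
  have := @conv_hull_comb s 'I_1 (fun=> 1) (fun=> u) (fun=> ler01).
  by rewrite !big_ord1 scale1r; apply.
rewrite !mem_filter => /andP[ta sa] /andP[bt sb].
have ab : 0 < lin_form c a - lin_form c b by lra.
pose w (i : bool) := (if i then lin_form c a - t else t - lin_form c b) /
                     (lin_form c a - lin_form c b).
have -> : cut_point c t a b = \sum_i w i *: (if i then b else a) by rewrite big_bool.
apply: conv_hull_comb; first by case; apply: divr_ge0; lra.
  by rewrite big_bool /w /=; field; rewrite gt_eqF.
by case.
Qed.

(* If [z = \sum_k l k *: s`_k] lies in [halfspace c t], the mass [deficit] that the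
   vertices below the hyperplane lack is compensated by the [excess] of those above.
   Moving the fraction [deficit / excess] of the mass of each vertex [a] above onto
   the cut points [cut_point c t a b] exhibits [z] as a convex combination of
   [cut_vertices s c t]. *)
Section CutCombination.
Variables (s : seq V) (c : 'cV[R]_d) (t : R) (l : 'I_(size s) -> R).
Hypotheses (l0 : forall k, 0 <= l k) (l1 : \sum_k l k = 1)
  (tz : t <= \sum_k l k * lin_form c s`_k).
Local Notation n := (size s).
Let g (k : 'I_n) := lin_form c s`_k.
Let above (k : 'I_n) := t <= g k.
Let excess := \sum_(k | above k) l k * (g k - t).
Let deficit := \sum_(k | ~~ above k) l k * (t - g k).

Let below_gap a b : above a -> ~~ above b -> g a - g b != 0.
Proof. by rewrite /above -ltNge => ta bt; rewrite subr_eq0 gt_eqF // (lt_le_trans bt). Qed.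

Lemma excess_ge0 : 0 <= excess.
Proof. by apply: sumr_ge0 => k tk; apply: mulr_ge0 => //; rewrite subr_ge0. Qed.

Lemma deficit_ge0 : 0 <= deficit.
Proof.
by apply: sumr_ge0 => k tk; apply: mulr_ge0 => //; rewrite subr_ge0 ltW // ltNge.
Qed.

Lemma deficit_le_excess : deficit <= excess.
Proof.
rewrite -subr_ge0.
have -> : excess - deficit = \sum_k l k * (g k - t).
  rewrite (bigID above predT) /= -sumrN; congr (_ + _).
  by apply: eq_bigr => k _; rewrite -mulrN opprB.
under eq_bigr do rewrite mulrBr.
by rewrite sumrB -mulr_suml l1 mul1r subr_ge0.
Qed.

Lemma excess_eq0_below k : excess = 0 -> ~~ above k -> l k = 0.
Proof.
move=> e0 tk.
have d0 : deficit = 0.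
  by apply/eqP; rewrite eq_le deficit_ge0 andbT -e0 deficit_le_excess.
have term_ge0 j : ~~ above j -> 0 <= l j * (t - g j).
  by move=> tj; apply: mulr_ge0 => //; rewrite subr_ge0 ltW // ltNge.
move: (psumr_eq0P term_ge0 d0 tk) => /eqP.
rewrite mulf_eq0 subr_eq0 => /orP[/eqP // | /eqP tg].
by move: tk; rewrite /above tg lexx.
Qed.

Let weight (i : 'I_n + 'I_n * 'I_n) : R :=
  match i with
  | inl k => if above k then l k * (1 - deficit / excess) else 0
  | inr p => if above p.1 && ~~ above p.2
             then l p.1 * l p.2 * (g p.1 - g p.2) / excess else 0
  end.

Let point (U : lmodType R) (G : 'I_n -> U) (i : 'I_n + 'I_n * 'I_n) : U :=
  match i with
  | inl k => G k
  | inr p => ((g p.1 - t) / (g p.1 - g p.2)) *: G p.2 +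
             ((t - g p.2) / (g p.1 - g p.2)) *: G p.1
  end.

(* [G := fun k => s`_k] recovers [z], and [G := fun=> 1] the total weight. *)
Section Regroup.
Variables (U : lmodType R) (G : 'I_n -> U).
Let above_sum := \sum_(k | above k) l k *: G k.
Let below_sum := \sum_(k | ~~ above k) l k *: G k.

Lemma weight_vertices_sum :
  \sum_k weight (inl k) *: point G (inl k) = above_sum - (deficit / excess) *: above_sum.
Proof.
rewrite (bigID above predT) /= [X in _ + X]big1 ?addr0; last first.
  by move=> k /negbTE /= ->; rewrite scale0r.
rewrite /above_sum scaler_sumr -sumrB; apply: eq_bigr => k /= ->.
by rewrite mulrBr mulr1 scalerBl scalerA (mulrC (deficit / excess)).
Qed.

Lemma weight_pairs_sum : \sum_p weight (inr p) *: point G (inr p) =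
  (excess / excess) *: below_sum + (deficit / excess) *: above_sum.
Proof.
rewrite (bigID (fun p => above p.1 && ~~ above p.2)) /= [X in _ + X]big1 ?addr0;
  last by move=> p /negbTE ->; rewrite scale0r.
rewrite (eq_bigr (fun p => (l p.1 * (g p.1 - t) / excess * l p.2) *: G p.2 +
                           (l p.2 * (t - g p.2) / excess * l p.1) *: G p.1)); last first.
  move=> [a b] /= /andP[ta tb]; rewrite ta tb /= scalerDr !scalerA.
  have := below_gap ta tb.
  by move: (excess^-1) => ie gab; congr (_ *: _ + _ *: _); field.
rewrite -(pair_big above (fun b => ~~ above b) (fun a b =>
  (l a * (g a - t) / excess * l b) *: G b + (l b * (t - g b) / excess * l a) *: G a)) /=.
under eq_bigr do rewrite big_split /=.
rewrite big_split /=; congr (_ + _).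
  under eq_bigr do under eq_bigr do rewrite -scalerA.
  under eq_bigr do rewrite -scaler_sumr.
  by rewrite -scaler_suml mulr_suml.
under eq_bigr do under eq_bigr do rewrite -scalerA.
under eq_bigr do rewrite -scaler_suml -mulr_suml.
by rewrite -scaler_sumr.
Qed.

Lemma weight_sum : \sum_i weight i *: point G i = \sum_k l k *: G k.
Proof.
rewrite big_sumType /= weight_vertices_sum weight_pairs_sum.
have -> : (excess / excess) *: below_sum = below_sum.
  have [e0|en] := eqVneq excess 0; last by rewrite divff // scale1r.
  by rewrite /below_sum big1 ?scaler0 // => k tk; rewrite (excess_eq0_below e0 tk) scale0r.
by rewrite [below_sum + _]addrC addrA subrK (bigID above predT).
Qed.
End Regroup.

Lemma weight_ge0 i : 0 <= weight i.
Proof.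
case: i => [k|[a b]] /=.
  case: ifP => // tk; apply: mulr_ge0 => //; rewrite subr_ge0.
  have [e0|en] := eqVneq excess 0; first by rewrite e0 invr0 mulr0 ler01.
  have ep : 0 < excess by rewrite lt_def en excess_ge0.
  by rewrite ler_pdivrMr // mul1r deficit_le_excess.
case: ifP => // /andP[ta tb]; apply: divr_ge0; last exact: excess_ge0.
by rewrite !mulr_ge0 // subr_ge0 ltW // (lt_le_trans _ ta) // ltNge.
Qed.

Lemma weight_point_mem i : 0 < weight i -> point (fun k => s`_k) i \in cut_vertices s c t.
Proof.
rewrite mem_cat; case: i => [k|[a b]] /=.
  case: ifP => [tk _ | _]; rewrite ?ltxx //.
  by rewrite mem_filter; apply/orP; left; apply/andP; split; [exact: tk | exact: mem_nth].
case: ifP => [/andP[ta tb] _ | _]; rewrite ?ltxx //.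
apply/orP; right; apply: (allpairs_f (cut_point c t)); rewrite mem_filter mem_nth //.
  by rewrite andbT.
by rewrite andbT ltNge.
Qed.

Lemma conv_hull_cut_vertices_sum : conv_hull (cut_vertices s c t) (\sum_k l k *: s`_k).
Proof.
rewrite -(weight_sum (fun k => s`_k)); apply: conv_hull_comb.
- exact: weight_ge0.
- have := weight_sum (U := R^o) (fun=> 1); rewrite /GRing.scale /= => wsum.
  rewrite -l1 -(eq_bigr _ (fun k _ => mulr1 (l k))) -wsum.
  apply: eq_bigr => -[k|[a b]] _ /=; rewrite /GRing.scale /= ?mulr1 //.
  case: ifP => [/andP[ta tb] | _]; last by rewrite mul0r.
  by have := below_gap ta tb; move: (_ / excess) => x gab; field.
- exact: weight_point_mem.
Qed.
End CutCombination.

Lemma conv_hullI_halfspace s c t :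
  conv_hull s `&` halfspace c t = conv_hull (cut_vertices s c t).
Proof.
apply/seteqP; split => [z [[l [l0 [l1 ->]]]] | z zc].
  by rewrite /halfspace /= lin_form_sum; exact: conv_hull_cut_vertices_sum.
split; last exact: conv_hull_sub_halfspace (@cut_vertices_halfspace s c t) _ zc.
exact: conv_hull_sub (@cut_vertices_conv_hull s c t) _ zc.
Qed.

Lemma polyhedronI_halfspace (P : set V) c t :
  polyhedron P -> polyhedron (P `&` halfspace c t).
Proof.
move=> [ss ->]; exists [seq cut_vertices s c t | s <- ss]; apply/seteqP; split.
  move=> z [[s ss_s sz] zc]; exists (cut_vertices s c t); first exact: map_f.
  by rewrite -conv_hullI_halfspace.
move=> z [_ /mapP[s ss_s ->]]; rewrite -conv_hullI_halfspace => -[sz zc].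
by split=> //; exists s.
Qed.

Lemma polyhedron_bigcup (I : finType) (Q : I -> set V) :
  (forall i, polyhedron (Q i)) -> polyhedron (\bigcup_i Q i).
Proof.
move=> /choice[ss ssP]; exists (flatten [seq ss i | i <- enum I]).
apply/seteqP; split => [z [i _] | z [s /flatten_mapP[i _ sis] sz]].
  by rewrite (ssP i) => -[s sis sz]; exists s => //; apply/flatten_mapP; exists i; rewrite ?mem_enum.
by exists i => //; rewrite (ssP i); exists s.
Qed.

(* [cube_face p e (j, false)] is [p_j + e <= z_j] and [cube_face p e (j, true)] is
   [z_j <= p_j - e]: the closed complements of the open cube of radius [e] about [p]. *)
Definition cube_face (p : V) (e : R) (i : 'I_d * bool) : set V :=
  halfspace ((-1) ^+ i.2 *: delta_mx i.1 0) ((-1) ^+ i.2 * p 0 i.1 + e).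

Lemma lin_form_signed_delta j (b : bool) (z : V) :
  lin_form ((-1) ^+ b *: delta_mx j 0) z = (-1) ^+ b * z 0 j.
Proof. by rewrite /lin_form -scalemxAr mxE -colE mxE. Qed.

Lemma cube_face_center p e i : 0 < e -> ~ cube_face p e i p.
Proof.
by move=> e0; apply/negP; rewrite /cube_face /halfspace /= lin_form_signed_delta -ltNge ltrDl.
Qed.

Lemma not_ball_cube_face p e z : 0 < e -> ~ ball p e z -> exists i, cube_face p e i z.
Proof.
move=> e0 pz; apply: contrapT => nface; apply: pz; split => // i j.
rewrite (ord1 i) /ball /= ltr_distlC.
have off (b : bool) : ~ ((-1) ^+ b * p 0 j + e <= (-1) ^+ b * z 0 j).
  by move=> zf; apply: nface; exists (j, b); rewrite /cube_face /halfspace /= lin_form_signed_delta.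
move: (off true) (off false); rewrite /= expr1 expr0 !mulN1r !mul1r.
by move=> /negP + /negP; rewrite -!ltNge => ? ?; apply/andP; split; lra.
Qed.
End Polyhedra.

Lemma closure_balls (R : numDomainType) (T : pseudoMetricType R) (A : set T) x :
  (forall e : R, 0 < e -> exists2 y, A y & ball x e y) -> closure A x.
Proof.
move=> Ax B /nbhs_ballP[e /= e0 eB].
by have [y Ay xy] := Ax e e0; exists y; split=> //; exact: eB.
Qed.

Theorem lemma6p1 (R : realType) (d : nat) (disp : Order.disp_t)
    (F : porderType disp) (P : set 'rV[R]_d) (f : 'rV[R]_d -> F) :
  polyhedron P ->
  f @` P = setT ->
  open_map_on P f ->
  polyhedral_map P f ->
  forall x y : F, (x < y)%O -> fibre P f x `<=` aff_boundary (fibre P f y).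
Proof.
move=> P_poly _ f_open _ x y xy p [Pp fpx].
split; last by case=> -[_ fpy] _; move: xy; rewrite -fpx fpy ltxx.
apply: closure_balls => e e0.
pose Q := \bigcup_i (P `&` cube_face p e i).
have Q_poly : polyhedron Q.
  by apply: polyhedron_bigcup => i; exact: polyhedronI_halfspace.
have W_open : open_subpolyhedron P (P `\` Q) by exists Q; split => //; split => // z [i _ []].
have Qp : ~ Q p by case=> i _ [_]; exact: cube_face_center.
have [w [Pw Qw] fwy] := f_open _ W_open x y (ex_intro2 _ _ p (conj Pp Qp) fpx) (ltW xy).
exists w => //; apply: contrapT => pw.
have [i wi] := not_ball_cube_face e0 pw.
by apply: Qw; exists i.
Qed.
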